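(* Let $G$ be a graph with $n$ nodes and graph Laplacian $\mathbf{L}$. Then a matrix $\mathbf{P}\in\mathbb{R}^{n\times d}$ is node- and adjacency-identifying if $\mathbf{L}=\mathbf{P}\mathbf{P}^T$.
   Context: Graphs are finite, undirected, without self-loops and without isolated nodes; $\mathbf{L}=\mathbf{D}-\mathbf{A}(G)$ with $\mathbf{D}$ the degree matrix and $\mathbf{A}(G)$ the adjacency matrix; $d_k>0$ is a fixed constant. For $\mathbf{W}^Q,\mathbf{W}^K\in\mathbb{R}^{d\times d}$ put $\tilde{\mathbf{P}}=\frac{1}{\sqrt{d_k}}\mathbf{P}\mathbf{W}^Q(\mathbf{P}\mathbf{W}^K)^T$. $\mathbf{P}$ is node-identifying if for some $\mathbf{W}^Q,\mathbf{W}^K$: $\tilde{\mathbf{P}}_{ij}=\max_k\tilde{\mathbf{P}}_{ik}\iff i=j$; adjacency-identifying if for some (possibly different) $\mathbf{W}^Q,\mathbf{W}^K$: $\tilde{\mathbf{P}}_{ij}=\max_k\tilde{\mathbf{P}}_{ik}\iff\mathbf{A}(G)_{ij}=1$. *)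

(* Reals are modelled by an arbitrary real closed field R
   (needed for Num.sqrt); this covers the real numbers. *)
From HB Require Import structures.
From mathcomp Require Import all_boot all_order all_algebra.
Set Implicit Arguments. Unset Strict Implicit. Unset Printing Implicit Defensive.
Import Order.TTheory GRing.Theory Num.Theory.
Local Open Scope ring_scope.

(* A graph on nodes 'I_n is given by an edge relation e : rel 'I_n.
   Simple undirected graph: e symmetric and irreflexive (hypotheses of the theorem). *)

Definition adjmx (R : nzRingType) (n : nat) (e : rel 'I_n) : 'M[R]_n :=
  \matrix_(i, j) (e i j)%:R.

Definition degree (n : nat) (e : rel 'I_n) (i : 'I_n) : nat := #|[pred j | e i j]|.

Definition degmx (R : nzRingType) (n : nat) (e : rel 'I_n) : 'M[R]_n :=
  \matrix_(i, j) ((i == j)%:R * (degree e i)%:R).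

Definition laplacian (R : nzRingType) (n : nat) (e : rel 'I_n) : 'M[R]_n :=
  degmx R e - adjmx R e.

Definition ptilde (R : rcfType) (n d : nat) (dk : R) (P : 'M[R]_(n, d))
  (WQ WK : 'M[R]_d) : 'M[R]_n :=
  (Num.sqrt dk)^-1 *: (P *m WQ *m (P *m WK)^T).

(* max_k M_ik  (seeded with M i i, which is itself one of the entries) *)
Definition rowmax (R : realDomainType) (n : nat) (M : 'M[R]_n) (i : 'I_n) : R :=
  \big[Num.max/M i i]_(k < n) M i k.

Definition node_identifying (R : rcfType) (n d : nat) (dk : R) (P : 'M[R]_(n, d)) : Prop :=
  exists WQ WK : 'M[R]_d, forall i j : 'I_n,
    ptilde dk P WQ WK i j = rowmax (ptilde dk P WQ WK) i <-> i = j.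

Definition adjacency_identifying (R : rcfType) (n d : nat) (e : rel 'I_n) (dk : R)
  (P : 'M[R]_(n, d)) : Prop :=
  exists WQ WK : 'M[R]_d, forall i j : 'I_n,
    ptilde dk P WQ WK i j = rowmax (ptilde dk P WQ WK) i <-> adjmx R e i j = 1.

(* With W^Q = W^K = I the score matrix is a positive multiple of L = P P^T,
   and row i of L is maximal exactly on the diagonal, since L_ii = deg i > 0
   while L_ik = -e_ik <= 0 for k <> i.  With W^Q = -I, W^K = I it is a
   positive multiple of -L, whose row i equals 1 exactly at the neighbours of
   i (there is one, as no node is isolated) and is <= 0 elsewhere. *)
From HB Require Import structures.
From mathcomp Require Import all_boot all_order all_algebra.
(* Loaded for rewriting with iff, not imported: its [symmetric] would shadow
   ssrbool's. *)
From Stdlib Require Setoid.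

Set Implicit Arguments.
Unset Strict Implicit.
Unset Printing Implicit Defensive.
Import Order.TTheory GRing.Theory Num.Theory.
Local Open Scope ring_scope.

Lemma rowmax_eqP (R : realDomainType) (n : nat) (M : 'M[R]_n) (i j : 'I_n) :
  M i j = rowmax M i <-> (forall k, M i k <= M i j).
Proof.
split=> [-> k | Mij_max]; first exact: le_bigmax.
by apply/le_anti; rewrite le_bigmax bigmax_le.
Qed.

Lemma rowmax_eq_scale (R : realDomainType) (n : nat) (M : 'M[R]_n) (c : R)
    (i j : 'I_n) :
  0 < c -> (c *: M) i j = rowmax (c *: M) i <-> M i j = rowmax M i.
Proof.
move=> c_gt0; split=> /rowmax_eqP Mij_max; apply/rowmax_eqP => k;
  by move: (Mij_max k); rewrite !mxE ler_pM2l.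
Qed.

Lemma ptilde_scalar (R : rcfType) (n d : nat) (dk a : R) (P : 'M[R]_(n, d)) :
  ptilde dk P a%:M 1%:M = (Num.sqrt dk)^-1 *: (a *: (P *m P^T)).
Proof. by rewrite /ptilde !mulmx1 mul_mx_scalar scalemxAl. Qed.

Lemma degree_gt0 (n : nat) (e : rel 'I_n) (i : 'I_n) :
  (exists j, e i j) -> (0 < degree e i)%N.
Proof. by case=> j e_ij; apply/card_gt0P; exists j. Qed.

Lemma adjmx_eq1 (R : nzRingType) (n : nat) (e : rel 'I_n) (i j : 'I_n) :
  adjmx R e i j = 1 <-> e i j.
Proof.
by rewrite mxE; case: (e i j); split=> // /eqP; rewrite eq_sym oner_eq0.
Qed.

Section LaplacianRows.

Variables (R : realDomainType) (n : nat) (e : rel 'I_n).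
Hypothesis e_irr : irreflexive e.

Lemma laplacian_diag (i : 'I_n) : laplacian R e i i = (degree e i)%:R.
Proof. by rewrite !mxE eqxx e_irr mul1r subr0. Qed.

Lemma laplacian_offdiag (i j : 'I_n) :
  i != j -> laplacian R e i j = - (e i j)%:R.
Proof. by move=> /negPf neq_ij; rewrite !mxE neq_ij mul0r sub0r. Qed.

Lemma laplacian_row_max_diag (i j : 'I_n) :
  (0 < degree e i)%N ->
  (forall k, laplacian R e i k <= laplacian R e i j) <-> i = j.
Proof.
move=> deg_gt0; have deg_pos : 0 < (degree e i)%:R :> R by rewrite ltr0n.
have offdiag_lt_diag k : i != k -> laplacian R e i k < laplacian R e i i.
  move=> neq_ik; rewrite laplacian_diag laplacian_offdiag //.
  by rewrite (le_lt_trans _ deg_pos) // oppr_le0.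
split=> [L_max | <- k]; last first.
  by case: (eqVneq i k) => [<- | /offdiag_lt_diag /ltW].
case: (eqVneq i j) => // neq_ij.
by have := L_max i; rewrite leNgt offdiag_lt_diag.
Qed.

Lemma opp_laplacian_row_max_adj (i j : 'I_n) :
  (exists k, e i k) ->
  (forall k, (- laplacian R e) i k <= (- laplacian R e) i j) <-> e i j.
Proof.
have diag_le0 : - laplacian R e i i <= 0 by rewrite laplacian_diag oppr_le0.
have offdiag k : i != k -> - laplacian R e i k = (e i k)%:R.
  by move=> neq_ik; rewrite laplacian_offdiag // opprK.
have neq_adj k : e i k -> i != k by apply: contraTneq => <-; rewrite e_irr.
have oppE k : (- laplacian R e) i k = - laplacian R e i k by rewrite mxE.
case=> k0 e_ik0; split=> [L_max | e_ij k].
  move: (L_max k0); rewrite !oppE offdiag ?neq_adj // e_ik0.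
  case: (eqVneq i j) => [<- | /offdiag ->]; last by case: (e i j); rewrite ?ler10.
  by move=> one_le; have := le_trans one_le diag_le0; rewrite ler10.
rewrite !oppE (offdiag j (neq_adj j e_ij)) e_ij.
case: (eqVneq i k) => [<- | /offdiag ->]; first exact: le_trans diag_le0 ler01.
by case: (e i k); rewrite ?ler01.
Qed.

End LaplacianRows.

Theorem lemmaF7 (R : rcfType) (n d : nat) (e : rel 'I_n) (dk : R)
  (dk_gt0 : 0 < dk)
  (e_sym : symmetric e) (e_irr : irreflexive e)
  (no_isolated : forall i : 'I_n, exists j : 'I_n, e i j)
  (P : 'M[R]_(n, d))
  (HL : laplacian R e = P *m P^T) :
  node_identifying dk P /\ adjacency_identifying e dk P.
Proof.
have c_gt0 : 0 < (Num.sqrt dk)^-1 by rewrite invr_gt0 sqrtr_gt0.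
split.
- exists 1%:M, 1%:M => i j.
  rewrite ptilde_scalar scale1r -HL rowmax_eq_scale // rowmax_eqP.
  exact/laplacian_row_max_diag/degree_gt0/no_isolated.
- exists (-1)%:M, 1%:M => i j.
  rewrite ptilde_scalar scaleN1r -HL rowmax_eq_scale // rowmax_eqP adjmx_eq1.
  exact: opp_laplacian_row_max_adj e_irr _ _ (no_isolated i).
Qed.
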